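(* Let $\sigma\in S_V$ be a valid composite state of $\mathcal{M}uddy\mathcal{P}uzzle$ with $\sigma\notin S_0$, and let $N=|M|$ where $M=\bigcup_{k}\mathit{Obs}(\sigma_k)$. Then for every component $i$ of $\sigma$ which is a running state $\sigma_i=\langle\mathit{Obs}_i,r_i,s_i\rangle$: (1) if $s_i=u$, then $r_i<|\mathit{Obs}_i|$ (and $|\mathit{Obs}_i|\le N$); (2) if $s_i=m$, then $r_i=N-1=|\mathit{Obs}_i|$; (3) if $s_i=c$, then $r_i=N=|\mathit{Obs}_i|$.
   Context: Fix $n \ge 1$ children indexed $1,\dots,n$. A message is a triple $\langle j, r, s\rangle$ with $j \in \{1,\dots,n\}$ (the sender), $r \in \mathbb{N}$ (a round number) and $s \in \{u,m,c\}$ (epistemic status: $u$ = ''does not know own status'', $m$ = ''knows they are muddy'', $c$ = ''knows they are clean''); $\bot$ denotes ''no message''. Child $i$ is a VLSM $\mathcal{C}_i$ with labels $\{\mathit{init},\mathit{emit},\mathit{receive}\}$, no initial messages, initial states $\langle \mathit{Obs}\rangle$ with $\mathit{Obs}\subseteq\{1,\dots,n\}$, and running states $\langle \mathit{Obs}, r, s\rangle$ with $\mathit{Obs}\subseteq\{1,\dots,n\}$, $r\in\mathbb{N}$, $s\in\{u,m,c\}$; $\mathit{Obs}(\cdot)$ denotes the observation set of either kind of state. Transitions $\tau_i$ and local validity $\beta_i$: - init: enabled only on an initial state $\langle\mathit{Obs}\rangle$ with input $\bot$; goes to $\langle \mathit{Obs},0,u\rangle$ if $\mathit{Obs}\ne\emptyset$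 and to $\langle\mathit{Obs},0,m\rangle$ if $\mathit{Obs}=\emptyset$; output $\bot$. - emit: enabled only on a running state $\langle\mathit{Obs},r,s\rangle$ with input $\bot$; state unchanged, output $\langle i,r,s\rangle$. - receive: on a running state $\langle\mathit{Obs},r,s\rangle$ with input message $\langle j,r',s'\rangle$, output $\bot$, new state given by the first applicable case: (R1) $s\in\{m,c\}$: unchanged. Otherwise $s=u$ and: (R2) $s'=c$, $j\notin\mathit{Obs}$, $r'=|\mathit{Obs}|$: $\langle\mathit{Obs},r',c\rangle$; (R3) $s'=c$, $j\notin\mathit{Obs}$, $r'=|\mathit{Obs}|+1$: $\langle\mathit{Obs},r'-1,m\rangle$; (R4) $s'=m$, $j\in\mathit{Obs}$, $r'=|\mathit{Obs}|$: $\langle\mathit{Obs},r',m\rangle$; (R5) $s'=m$, $j\in\mathit{Obs}$, $r'=|\mathit{Obs}|-1$: $\langle\mathit{Obs},r'+1,c\rangle$; (R6) $s'=u$, $j\in\mathit{Obs}$, $r'<r$: unchanged; (R7) $s'=u$, $j\in\mathit{Obs}$, $r\le r'<|\mathit{Obs}|-1$: $\langle\mathit{Obs},r'+1,u\rangle$; (R8) $s'=u$, $j\in\mathit{Obs}$, $r'=|\mathit{Obs}|-1$: $\langle\mathit{Obs},r'+1,m\rangle$; (R9) $s'=u$, $j\notin\mathit{Obs}$, $r'\le r$: unchanged; (R10) $s'=u$, $j\notin\mathit{Obs}$, $r<r'<|\mathit{Obs}|$: $\langle\mathit{Obs},r',u\rangle$; (R11) $s'=u$, $j\notin\mathit{Obs}$,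 $r'=|\mathit{Obs}|$: $\langle\mathit{Obs},r',m\rangle$. $\beta_i$ for receive holds exactly when one of (R1)–(R11) applies. Composition $\mathcal{M}uddy\mathcal{P}uzzle=(\mathcal{C}_1+\dots+\mathcal{C}_n)|_\varphi$: composite states are tuples $\sigma=(\sigma_1,\dots,\sigma_n)$; composite initial states ($S_0$) are those with every component initial; labels are pairs $(i,l)$; transition $(i,l)$ with input $\mu$ applies $\tau_i(l,\sigma_i,\mu)$ to component $i$, leaves the others unchanged, and is allowed iff $\beta_i(l,\sigma_i,\mu)\wedge\varphi((i,l),\sigma,\mu)$. For a composite state $\sigma$ let $M=\bigcup_{i}\mathit{Obs}(\sigma_i)$; $\mathbf{consistent}(\sigma)$ means $M\ne\emptyset$ and $\mathit{Obs}(\sigma_i)=M\setminus\{i\}$ for all $i$. The composition constraint: $\varphi((i,\mathit{init}),\sigma,\mu)=\mathbf{consistent}(\sigma)$; $\varphi((i,\mathit{emit}),\sigma,\mu)=\text{true}$; $\varphi((i,\mathit{receive}),\sigma,\langle j,r',s'\rangle)$ holds iff $\sigma_j$ is a running state $\langle \mathit{Obs}_j,r_j,s_j\rangle$ and $(s'=s_j\wedge r'=r_j)\vee(s'=u\wedge r'<r_j)$. Validity (VLSM sense): a transition is constrained if its input satisfies the constraint. Valid traces and valid messages are defined by simultaneous induction: a valid trace is a finite sequence of constrained transitions starting in a composite initial state in which every input message is either $\bot$ or a valid message; a valid message is one output by some transition of some valid trace. A valid state is one reachable by a valid trace; $S_V$ is the set of valid states and $S_V^\ast=S_V\setminus S_0$.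 *)

(* Children are indexed by 'I_n (0-based) instead of 1..n. *)
From mathcomp Require Import all_boot.
Set Implicit Arguments. Unset Strict Implicit. Unset Printing Implicit Defensive.

Inductive status := U | Mu | Cl.

Section Muddy.
Variable n : nat.

(* message <j, r, s>; "no message" (bottom) is None *)
Record msg := Msg { sender : 'I_n ; mround : nat ; mstatus : status }.

Inductive cstate :=
| Init of {set 'I_n}
| Run of {set 'I_n} & nat & status.

Definition obs (st : cstate) : {set 'I_n} :=
  match st with Init Ob => Ob | Run Ob _ _ => Ob end.

Inductive label := linit | lemit | lreceive.

(* receive transition on a running state, first applicable case of R1-R11;
   None when no case applies (i.e. beta_i fails) *)
Definition receive (Ob : {set 'I_n}) (r : nat) (s : status) (mu : msg)
  : option cstate :=
  let: Msg j r' s' := mu in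
  match s with
  | Mu | Cl => Some (Run Ob r s)                                   (* R1 *)
  | U =>
    match s' with
    | Cl => if j \notin Ob then
              if r' == #|Ob| then Some (Run Ob r' Cl)                (* R2 *)
              else if r' == #|Ob|.+1 then Some (Run Ob (r' - 1) Mu) (* R3 *)
              else None
            else None
    | Mu => if j \in Ob then
              if r' == #|Ob| then Some (Run Ob r' Mu)                (* R4 *)
              else if r'.+1 == #|Ob| then Some (Run Ob r'.+1 Cl)     (* R5 : r' = |Ob|-1 *)
              else None
            else None
    | U => if j \in Ob then
             if r' < r then Some (Run Ob r U)                       (* R6 *)
             else if r'.+2 <= #|Ob| then Some (Run Ob r'.+1 U)      (* R7 : r <= r' < |Ob|-1 *)
             else if r'.+1 == #|Ob| then Some (Run Ob r'.+1 Mu)     (* R8 : r' = |Ob|-1 *)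
             else None
           else
             if r' <= r then Some (Run Ob r U)                      (* R9 *)
             else if r' < #|Ob| then Some (Run Ob r' U)             (* R10 *)
             else if r' == #|Ob| then Some (Run Ob r' Mu)           (* R11 *)
             else None
    end
  end.

(* local transition tau_i restricted to where beta_i holds (and the
   transition is enabled); returns (new state, output) *)
Definition ltrans (i : 'I_n) (l : label) (st : cstate) (mu : option msg)
  : option (cstate * option msg) :=
  match l, st, mu with
  | linit, Init Ob, None =>
      Some (Run Ob 0 (if Ob == set0 then Mu else U), None)
  | lemit, Run Ob r s, None => Some (Run Ob r s, Some (Msg i r s))
  | lreceive, Run Ob r s, Some m =>
      match receive Ob r s m with Some st' => Some (st', None) | None => None end
  | _, _, _ => None
  end.

Definition cstate_c := 'I_n -> cstate.

Definition composite_initial (sg : cstate_c) : Prop :=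
  forall i, exists Ob, sg i = Init Ob.

Definition bigM (sg : cstate_c) : {set 'I_n} := \bigcup_(k : 'I_n) obs (sg k).

Definition consistent (sg : cstate_c) : Prop :=
  bigM sg != set0 /\ forall i, obs (sg i) = bigM sg :\ i.

Definition phi (i : 'I_n) (l : label) (sg : cstate_c) (mu : option msg) : Prop :=
  match l with
  | linit => consistent sg
  | lemit => True
  | lreceive =>
      match mu with
      | Some (Msg j r' s') =>
          exists Oj rj sj, sg j = Run Oj rj sj /\
            ((s' = sj /\ r' = rj) \/ (s' = U /\ r' < rj))
      | None => False
      end
  end.

Definition update (sg : cstate_c) (i : 'I_n) (st : cstate) : cstate_c :=
  fun k => if k == i then st else sg k.

Inductive valid_state : cstate_c -> Prop :=
| vs_init : forall sg, composite_initial sg -> valid_state sg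
| vs_step : forall sg i l mu st' out,
    valid_state sg ->
    (mu = None \/ exists m, mu = Some m /\ valid_msg m) ->
    phi i l sg mu ->
    ltrans i l (sg i) mu = Some (st', out) ->
    valid_state (update sg i st')
with valid_msg : msg -> Prop :=
| vm_out : forall sg i l mu st' m,
    valid_state sg ->
    (mu = None \/ exists m0, mu = Some m0 /\ valid_msg m0) ->
    phi i l sg mu ->
    ltrans i l (sg i) mu = Some (st', Some m) ->
    valid_msg m.

End Muddy.

From mathcomp Require Import all_boot.
From mathcomp Require Import zify.
Set Implicit Arguments. Unset Strict Implicit.

(* Every valid state that is not composite-initial satisfies the
   invariant [valid_invariant]: it is [consistent] (every child observes
   exactly the muddy children other than itself, so |Obs_i| + [i muddy] = N
   with N = |M|), and every running component <Obs, r, s> satisfies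
   [run_invariant N]: r < |Obs| when s = u, r = |Obs| = N - 1 when s = m and
   r = |Obs| = N when s = c.  Transitions never change observation sets, so M and consistency
   are preserved once established, and the first transition out of an
   initial state is necessarily an init, guarded by consistency.  The new
   component satisfies [run_invariant N]: for init by a cardinality
   argument, for emit trivially, and for receive by a case analysis over the
   rules (R2)-(R11), using the constraint phi, which ties the message to the
   current, invariant-satisfying state of its sender.  The theorem is then
   read off the invariant together with |Obs_i| <= N. *)

Section Invariant.
Variable n : nat.
Implicit Types (sg : cstate_c n) (Ob : {set 'I_n}) (st : cstate n).

Definition run_invariant (N : nat) st : Prop :=
  match st with
  | Init _ => True
  | Run Ob r U => r < #|Ob|
  | Run Ob r Mu => r = N - 1 /\ #|Ob| = N - 1
  | Run Ob r Cl => r = N /\ #|Ob| = N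
  end.

Definition valid_invariant sg : Prop :=
  composite_initial sg \/
  (consistent sg /\ forall k, run_invariant #|bigM sg| (sg k)).

Lemma receive_obs Ob r s m st' :
  receive Ob r s m = Some st' -> obs st' = Ob.
Proof.
case: m => j r' s'; rewrite /receive.
by case: s; case: s'; repeat case: ifP => _; try discriminate; move=> [<-].
Qed.

Lemma ltrans_obs (i : 'I_n) l st mu st' out :
  ltrans i l st mu = Some (st', out) -> obs st' = obs st.
Proof.
case: l; case: st => [Ob|Ob r s]; case: mu => [m|] //=; [by case=> <- | by case=> <- |].
by case E: receive => [st2|] // [<- _]; exact: receive_obs E.
Qed.

Lemma bigM_update sg i st' :
  obs st' = obs (sg i) -> bigM (update sg i st') = bigM sg.
Proof.
move=> Hobs; apply: eq_bigr => k _; rewrite /update.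
by case: eqP => [->|].
Qed.

Lemma consistent_update sg i st' :
  obs st' = obs (sg i) -> consistent sg -> consistent (update sg i st').
Proof.
move=> Hobs [HM Hk]; rewrite /consistent bigM_update //; split=> // k.
by rewrite /update; case: eqP => [->|_]; rewrite ?Hobs.
Qed.

Lemma card_obs sg k :
  consistent sg -> #|obs (sg k)| + (k \in bigM sg) = #|bigM sg|.
Proof. by case=> _ Hk; rewrite Hk [in RHS](cardsD1 k (bigM sg)) addnC. Qed.

(* A transition allowed by phi from a composite-initial state is an init,
   whose guard is consistency. *)
Lemma step_from_initial_consistent sg i l mu st' out :
  composite_initial sg -> phi i l sg mu ->
  ltrans i l (sg i) mu = Some (st', out) -> consistent sg.
Proof.
move=> Hinit; case: l => //= [_|].
- by case: (Hinit i) => Ob ->; case: mu => [[]|].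
- case: mu => [[j r' s']|] // [Oj [rj [sj [Hj _]]]].
  by case: (Hinit j) => Ob; rewrite Hj.
Qed.

(* The init transition starts each child in a state satisfying the claim:
   a child observing nobody is the unique muddy child (N = 1, round 0). *)
Lemma init_invariant sg i Ob :
  consistent sg -> sg i = Init Ob ->
  run_invariant #|bigM sg| (Run Ob 0 (if Ob == set0 then Mu else U)).
Proof.
move=> Hcons Hi; have := card_obs i Hcons; rewrite Hi /=.
case: eqP => [->|/eqP Hne] /= Hcard; last by rewrite card_gt0.
have HN : #|bigM sg| != 0 by rewrite cards_eq0; case: Hcons.
by rewrite cards0 in Hcard *; case: (i \in bigM sg) Hcard HN => /=; lia.
Qed.

(* Core of the receive case: an undecided child whose round is below |Obs|
   receives a message from another child; bi and bj record whether the
   receiver and the sender are muddy.  Phi forces the message to be either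
   the sender's current knowledge or an older u-message. *)
Lemma receive_U_invariant (N : nat) Ob (Oj : {set 'I_n}) (bi bj : bool) r rj sj j r' s' st' :
  #|Ob| + bi = N -> #|Oj| + bj = N -> run_invariant N (Run Oj rj sj) ->
  r < #|Ob| -> ((s' = sj /\ r' = rj) \/ (s' = U /\ r' < rj)) ->
  (j \in Ob) = bj -> receive Ob r U (Msg j r' s') = Some st' ->
  run_invariant N st'.
Proof.
move=> Hi Hj Hsender Hr Hmsg Hjin; rewrite /receive Hjin.
case: bi Hi => /= Hi; case: bj Hj Hjin => /= Hj Hjin;
case: Hmsg => [[-> ->]|[-> Hlt]] /=; case: sj Hsender => /= Hsender;
repeat (case: ifP => /=; rewrite ?eqE /=; move=> ?);
by try discriminate; move=> [<-] /=; first [assumption | lia].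
Qed.

(* A child's own message can only be an earlier or current u-message,
   which rule (R9) ignores. *)
Lemma receive_own_message Ob r j r' st' :
  j \notin Ob -> r' <= r -> receive Ob r U (Msg j r' U) = Some st' ->
  st' = Run Ob r U.
Proof. by move=> /negbTE Hj Hr'; rewrite /receive Hj Hr' => -[<-]. Qed.

Lemma receive_invariant sg i Ob r s m st' :
  consistent sg -> (forall k, run_invariant #|bigM sg| (sg k)) ->
  sg i = Run Ob r s -> phi i lreceive sg (Some m) ->
  receive Ob r s m = Some st' -> run_invariant #|bigM sg| st'.
Proof.
move=> Hcons Hall Hi; case: m => j r' s' /= [Oj [rj [sj [Hj Hmsg]]]].
have := Hall i; rewrite Hi.
case: s Hi => Hi /= Hrun; [| by case=> <- | by case=> <-].
have Hobs_i : Ob = bigM sg :\ i by case: Hcons => _ /(_ i); rewrite Hi.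
have [Hji | Hji] := eqVneq j i.
  have Hi_nin : i \notin Ob by rewrite Hobs_i setD11.
  move: Hj; rewrite Hji Hi => -[HOj Hrj Hsj]; subst j Oj rj sj.
  by case: Hmsg => [[-> ->] | [-> /ltnW Hle]] /receive_own_message -> .
have Hjin : (j \in Ob) = (j \in bigM sg) by rewrite Hobs_i in_setD1 Hji.
have Hcard_i := card_obs i Hcons; rewrite Hi in Hcard_i.
have Hcard_j := card_obs j Hcons; rewrite Hj in Hcard_j.
have := Hall j; rewrite Hj => Hsender.
exact: receive_U_invariant Hcard_i Hcard_j Hsender Hrun Hmsg Hjin.
Qed.

Lemma step_invariant sg i l mu st' out :
  consistent sg -> (forall k, run_invariant #|bigM sg| (sg k)) ->
  phi i l sg mu -> ltrans i l (sg i) mu = Some (st', out) ->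
  run_invariant #|bigM sg| st'.
Proof.
move=> Hcons Hall; case: l => /=; case Hi: (sg i) => [Ob|Ob r s];
case: mu => [m|] //= Hphi.
- by case=> <- _; exact: init_invariant Hcons Hi.
- by case=> <- _; have := Hall i; rewrite Hi.
- case E: receive => [st2|] // [<- _].
  exact: receive_invariant Hcons Hall Hi Hphi E.
Qed.

Lemma valid_state_invariant sg : valid_state sg -> valid_invariant sg.
Proof.
elim=> {sg} [sg Hinit | sg i l mu st' out _ IH _ Hphi Hstep]; first by left.
have Hobs := ltrans_obs Hstep.
have [Hcons Hall] : consistent sg /\ forall k, run_invariant #|bigM sg| (sg k).
  case: IH => [Hinit | //]; split; first exact: step_from_initial_consistent Hphi Hstep.
  by move=> k; case: (Hinit k) => Ob ->.
right; split; first exact: consistent_update.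
rewrite bigM_update // => k; rewrite /update; case: eqP => // _.
exact: step_invariant Hphi Hstep.
Qed.

End Invariant.

Theorem mainTheorem3 (n : nat) (hn : 0 < n) (sg : cstate_c n) :
  valid_state sg -> ~ composite_initial sg ->
  forall (i : 'I_n) (Ob : {set 'I_n}) (r : nat) (s : status),
    sg i = Run Ob r s ->
    (s = U -> r < #|Ob| /\ #|Ob| <= #|bigM sg|) /\
    (s = Mu -> r = #|bigM sg| - 1 /\ #|Ob| = #|bigM sg| - 1) /\
    (s = Cl -> r = #|bigM sg| /\ #|Ob| = #|bigM sg|).
Proof.
move=> Hvalid Hnot_init i Ob r s Hi.
have [// | [Hcons Hall]] := valid_state_invariant Hvalid.
have := Hall i; rewrite Hi.
have := card_obs i Hcons; rewrite Hi /= => Hcard.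
by case: s Hi => _ /= Hrun; (split; [|split]) => // _; lia.
Qed.
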